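(* The space $L(\omega_1)$ is totally Lindelöf.
   Context: $L(\omega_1)$ is the set $\omega_1+1$ with the topology in which every $\alpha<\omega_1$ is isolated and the sets $]\alpha,\omega_1]=\{\gamma:\alpha<\gamma\le\omega_1\}$, $\alpha<\omega_1$, form a local base at $\omega_1$. A filter base on $X$ is a nonempty $\mathcal{F}\subseteq\mathcal{P}(X)$ with $\emptyset\notin\mathcal{F}$ and closed under pairwise intersections; it is stable under countable intersections if for every countable $S\subseteq\mathcal{F}$ there is $H\in\mathcal{F}$ with $H\subseteq\bigcap S$. $ad(\mathcal{F})=\bigcap\{\overline{F}:F\in\mathcal{F}\}$. A filter base $\mathcal{F}$ is total if every filter base $\mathcal{H}\supseteq\mathcal{F}$ satisfies $ad(\mathcal{H})\neq\emptyset$. $X$ is totally Lindelöf if every filter base on $X$ stable under countable intersections is contained in a total filter base on $X$ stable under countable intersections. *)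

From Stdlib Require Import Classical.

Set Implicit Arguments.

Definition countable_set (Y : Type) (S : Y -> Prop) : Prop :=
  exists f : Y -> nat, forall a b, S a -> S b -> f a = f b -> a = b.

Section Generic.
Variable X : Type.
Variable is_open : (X -> Prop) -> Prop.

Definition closure (A : X -> Prop) (x : X) : Prop :=
  forall U, is_open U -> U x -> exists y, U y /\ A y.

Definition filter_base (F : (X -> Prop) -> Prop) : Prop :=
  (exists A, F A) /\
  (forall A, F A -> exists x, A x) /\
  (forall A B, F A -> F B -> F (fun x => A x /\ B x)).

Definition stable_countable (F : (X -> Prop) -> Prop) : Prop :=
  forall S : (X -> Prop) -> Prop,
    (forall A, S A -> F A) -> countable_set S ->
    exists H, F H /\ forall A, S A -> forall x, H x -> A x.

Definition ad (F : (X -> Prop) -> Prop) (x : X) : Prop :=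
  forall A, F A -> closure A x.

Definition total (F : (X -> Prop) -> Prop) : Prop :=
  forall H : (X -> Prop) -> Prop, filter_base H ->
    (forall A, F A -> H A) -> exists x, ad H x.

Definition totally_Lindelof : Prop :=
  forall F, filter_base F -> stable_countable F ->
    exists G, filter_base G /\ stable_countable G /\ total G /\
              (forall A, F A -> G A).
End Generic.

(* (T, lt) is an order isomorphic to omega_1: a well-founded strict total
   order on an uncountable type all of whose proper initial segments are
   countable. *)
Definition omega1_like (T : Type) (lt : T -> T -> Prop) : Prop :=
  (forall a, ~ lt a a) /\
  (forall a b c, lt a b -> lt b c -> lt a c) /\
  (forall a b, lt a b \/ a = b \/ lt b a) /\
  well_founded lt /\
  ~ countable_set (fun _ : T => True) /\
  (forall a, countable_set (fun b => lt b a)).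

(* L(omega_1) has carrier omega_1 + 1 = option T, where [Some a] is the
   ordinal a < omega_1 and [None] is the point omega_1.  Points of T are
   isolated; the sets ]a, omega_1] form a local base at omega_1.  Hence
   U is open iff  U None -> exists a, ]a, omega_1] ⊆ U. *)
Definition L_open (T : Type) (lt : T -> T -> Prop) (U : option T -> Prop) : Prop :=
  U None -> exists a : T, U None /\ forall g : T, lt a g -> U (Some g).

From Stdlib Require Import Classical ClassicalEpsilon Cantor.

(* If some member of F is countable, countable stability forces F to have a
   common point x, and the filter of all sets containing x is total.
   Otherwise every member of F is uncountable, hence meets every tail
   ]a, omega_1]; since a countable set of ordinals is bounded below omega_1,
   the traces of F on the tails still form a countably stable filter base,
   and it is total because it contains a neighbourhood base at omega_1. *)

Lemma countable_subset (Y : Type) (P Q : Y -> Prop) :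
  (forall y, Q y -> P y) -> countable_set P -> countable_set Q.
Proof. intros HQ [f Hf]. exists f. intros a b Ha Hb E. apply Hf; auto. Qed.

Lemma countable_singleton {Y : Type} (c : Y) : countable_set (fun y => y = c).
Proof. exists (fun _ => 0). intros a b -> -> _. reflexivity. Qed.

Lemma countable_bigunion {I Y : Type} {J : I -> Prop} (P : I -> Y -> Prop) :
  countable_set J -> (forall i, J i -> countable_set (P i)) ->
  countable_set (fun y => exists i, J i /\ P i y).
Proof.
  intros [f Hf] HP.
  destruct (choice (fun (i : I) (fi : Y -> nat) =>
     J i -> forall a b, P i a -> P i b -> fi a = fi b -> a = b)) as [code Hcode].
  { intros i. destruct (classic (J i)) as [Ji|Ni].
    - destruct (HP i Ji) as [fi Hfi]. exists fi. intros _; exact Hfi.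
    - exists (fun _ => 0). intros; contradiction. }
  destruct (choice (fun (y : Y) (o : option I) =>
     (exists i, J i /\ P i y) -> exists i, o = Some i /\ J i /\ P i y)) as [idx Hidx].
  { intros y. destruct (classic (exists i, J i /\ P i y)) as [[i Hi]|N].
    - exists (Some i). intros _. exists i; auto.
    - exists None. intros E; contradiction. }
  exists (fun y => match idx y with Some i => Cantor.to_nat (f i, code i y) | None => 0 end).
  intros a b Ha Hb.
  destruct (Hidx a Ha) as [i [-> [Ji Pa]]]. destruct (Hidx b Hb) as [j [-> [Jj Pb]]].
  intros E. apply (f_equal Cantor.of_nat) in E. rewrite !Cantor.cancel_of_to in E.
  injection E as Eij Ecode.
  assert (i = j) by (apply Hf; auto). subst j.
  exact (Hcode i Ji a b Pa Pb Ecode).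
Qed.

Lemma countable_image {Y Z : Type} {P : Y -> Prop} (g : Y -> Z) :
  countable_set P -> countable_set (fun z => exists y, P y /\ z = g y).
Proof.
  intros HP. exact (countable_bigunion (fun y z => z = g y) HP
                      (fun y _ => countable_singleton (g y))).
Qed.

Lemma countable_union {Y : Type} {P Q : Y -> Prop} :
  countable_set P -> countable_set Q -> countable_set (fun y => P y \/ Q y).
Proof.
  intros HP HQ.
  apply countable_subset with
    (fun y => exists b : bool, True /\ (if b then P y else Q y)).
  - intros y [Py|Qy]; [exists true | exists false]; auto.
  - apply (countable_bigunion (fun (b : bool) y => if b then P y else Q y)).
    + exists (fun b : bool => if b then 0 else 1). intros [] [] _ _ E; congruence.
    + intros []; auto.
Qed.

Section FilterBases.
Context {X : Type} (is_open : (X -> Prop) -> Prop).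

Lemma total_of_nbhd_base (G : (X -> Prop) -> Prop) (p : X) :
  (forall U, is_open U -> U p -> exists B, G B /\ forall x, B x -> U x) ->
  total is_open G.
Proof.
  intros Hbase H [_ [Hne Hint]] GH. exists p. intros A HA U Uo Up.
  destruct (Hbase U Uo Up) as [B [GB BU]].
  destruct (Hne _ (Hint _ _ HA (GH B GB))) as [y [Ay By]].
  exists y; auto.
Qed.

Lemma filter_base_fixed (x : X) : filter_base (fun A : X -> Prop => A x).
Proof.
  split; [exists (fun _ => True); exact I | split].
  - intros A Ax. exists x; exact Ax.
  - intros A B; split; assumption.
Qed.

Lemma stable_countable_fixed (x : X) : stable_countable (fun A : X -> Prop => A x).
Proof.
  intros S HS _. exists (fun y => y = x). split; [reflexivity|].
  intros A SA y ->. exact (HS A SA).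
Qed.

Lemma total_fixed (x : X) : total is_open (fun A : X -> Prop => A x).
Proof.
  apply total_of_nbhd_base with x. intros U _ Ux.
  exists (fun y => y = x). split; [reflexivity | intros y ->; exact Ux].
Qed.

Lemma fixed_point_of_countable_member {F : (X -> Prop) -> Prop} {A : X -> Prop} :
  filter_base F -> stable_countable F -> F A -> countable_set A ->
  exists x, forall B, F B -> B x.
Proof.
  intros [_ [Fne Fint]] Fst FA CA. apply NNPP; intros Nfix.
  assert (Hmiss : forall x, exists B, F B /\ ~ B x).
  { intros x. apply NNPP; intros N. apply Nfix. exists x. intros B FB.
    apply NNPP; intros NB. apply N. exists B; auto. }
  destruct (choice _ Hmiss) as [miss Hmiss'].
  destruct (Fne A FA) as [x0 Ax0].
  destruct (Fst (fun B => exists x, A x /\ B = (fun z => A z /\ miss x z)))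
    as [H [FH HH]].
  - intros B [x [_ ->]]. apply Fint; [exact FA | apply Hmiss'].
  - exact (countable_image (fun x z => A z /\ miss x z) CA).
  - destruct (Fne H FH) as [y Hy].
    assert (Ay : A y) by exact (proj1 (HH _ (ex_intro _ x0 (conj Ax0 eq_refl)) y Hy)).
    apply (proj2 (Hmiss' y)).
    exact (proj2 (HH _ (ex_intro _ y (conj Ay eq_refl)) y Hy)).
Qed.

End FilterBases.

Definition tail {T : Type} (lt : T -> T -> Prop) (a : T) (x : option T) : Prop :=
  match x with None => True | Some g => lt a g end.

Definition tail_filter {T : Type} (lt : T -> T -> Prop)
    (F : (option T -> Prop) -> Prop) (B : option T -> Prop) : Prop :=
  exists A a, F A /\ forall x, A x -> tail lt a x -> B x.

Section Omega1.
Context {T : Type} {lt : T -> T -> Prop}.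
Hypothesis Hom : omega1_like lt.

Lemma omega1_inhabited : inhabited T.
Proof.
  destruct Hom as [_ [_ [_ [_ [unc _]]]]].
  apply NNPP; intros N. apply unc. exists (fun _ => 0). intros a.
  exfalso; apply N; constructor; exact a.
Qed.

Lemma omega1_countable_bounded (C : T -> Prop) :
  countable_set C -> exists m, forall a, C a -> a = m \/ lt a m.
Proof.
  destruct Hom as [_ [_ [tri [_ [unc segs]]]]]. intros HC.
  apply NNPP; intros Nbound. apply unc.
  apply countable_subset with (fun z => exists i, C i /\ lt z i).
  - intros z _. apply NNPP; intros Nz. apply Nbound. exists z. intros a Ca.
    destruct (tri a z) as [h|[h|h]]; auto. exfalso; apply Nz; exists a; auto.
  - apply countable_bigunion; auto.
Qed.

Lemma tail_le (a m : T) : a = m \/ lt a m -> forall x, tail lt m x -> tail lt a x.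
Proof.
  destruct Hom as [_ [tr _]].
  intros [->|h] [g|]; simpl; eauto.
Qed.

Lemma tail_meet (a b : T) : exists m, forall x, tail lt m x -> tail lt a x /\ tail lt b x.
Proof.
  destruct Hom as [_ [_ [tri _]]].
  destruct (tri a b) as [h|[->|h]];
    [exists b | exists b | exists a]; intros x Tx; split; try exact Tx;
    apply tail_le with (2 := Tx); auto.
Qed.

Lemma countable_of_tail_disjoint (A : option T -> Prop) (c : T) :
  (forall x, A x -> ~ tail lt c x) -> countable_set A.
Proof.
  destruct Hom as [_ [_ [tri [_ [_ segs]]]]]. intros Hdisj.
  apply countable_subset with (fun x => exists b, (b = c \/ lt b c) /\ x = Some b).
  - intros [b|] Ax; [|exfalso; exact (Hdisj None Ax I)].
    exists b. split; [|reflexivity].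
    destruct (tri b c) as [h|[h|h]]; auto. exfalso; exact (Hdisj _ Ax h).
  - apply countable_image, countable_union; [apply countable_singleton | apply segs].
Qed.

Section TailFilter.
Context {F : (option T -> Prop) -> Prop}.
Hypotheses (HF : filter_base F) (Fst : stable_countable F).
Hypothesis Fmeet : forall A a, F A -> exists x, A x /\ tail lt a x.

Lemma tail_filter_extends (A : option T -> Prop) : F A -> tail_filter lt F A.
Proof.
  destruct omega1_inhabited as [t0]. intros FA. exists A, t0. auto.
Qed.

Lemma filter_base_tail_filter : filter_base (tail_filter lt F).
Proof.
  destruct HF as [[A0 FA0] [_ Fint]]. split; [|split].
  - exists A0. apply tail_filter_extends, FA0.
  - intros B [A [a [FA HB]]]. destruct (Fmeet A a FA) as [x [Ax Tx]]. eauto.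
  - intros B1 B2 [A1 [a1 [FA1 HB1]]] [A2 [a2 [FA2 HB2]]].
    destruct (tail_meet a1 a2) as [m Hm].
    exists (fun x => A1 x /\ A2 x), m. split; [auto|].
    intros x [A1x A2x] Tx. destruct (Hm x Tx). auto.
Qed.

Lemma stable_countable_tail_filter : stable_countable (tail_filter lt F).
Proof.
  destruct HF as [[A0 _] _]. destruct omega1_inhabited as [t0].
  intros S HS CS.
  destruct (choice (fun B (p : (option T -> Prop) * T) =>
     S B -> F (fst p) /\ forall x, fst p x -> tail lt (snd p) x -> B x)) as [wit Hwit].
  { intros B. destruct (classic (S B)) as [SB|NB].
    - destruct (HS B SB) as [A [a Ha]]. exists (A, a). intros _; exact Ha.
    - exists (A0, t0). intros SB; contradiction. }
  destruct (Fst (fun A => exists B, S B /\ A = fst (wit B))) as [H [FH HH]].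
  { intros A [B [SB ->]]. apply Hwit, SB. }
  { apply countable_image, CS. }
  destruct (omega1_countable_bounded (fun a => exists B, S B /\ a = snd (wit B)))
    as [m Hm].
  { apply countable_image, CS. }
  exists (fun x => H x /\ tail lt m x). split.
  - exists H, m. auto.
  - intros B SB x [Hx Tx]. apply (Hwit B SB).
    + apply (HH (fst (wit B))); eauto.
    + apply tail_le with m; eauto.
Qed.

Lemma total_tail_filter : total (L_open lt) (tail_filter lt F).
Proof.
  destruct HF as [[A0 FA0] _].
  apply total_of_nbhd_base with None. intros U Uo UN.
  destruct (Uo UN) as [a [_ Ua]].
  exists (tail lt a). split.
  - exists A0, a. auto.
  - intros [g|] Tg; [exact (Ua g Tg) | exact UN].
Qed.

End TailFilter.
End Omega1.

Theorem proposition1p1 (T : Type) (lt : T -> T -> Prop) :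
  omega1_like lt -> totally_Lindelof (L_open lt).
Proof.
  intros Hom F HF Fst.
  destruct (classic (exists A, F A /\ countable_set A)) as [[A [FA CA]] | Nctbl].
  - destruct (fixed_point_of_countable_member HF Fst FA CA) as [x Hx].
    exists (fun A => A x).
    split; [apply filter_base_fixed | split; [apply stable_countable_fixed |
      split; [apply total_fixed | exact Hx]]].
  - assert (Fmeet : forall A a, F A -> exists x, A x /\ tail lt a x).
    { intros A a FA. apply NNPP; intros N. apply Nctbl. exists A. split; [exact FA|].
      apply (countable_of_tail_disjoint Hom A a). intros x Ax Tx. eauto. }
    exists (tail_filter lt F).
    split; [exact (filter_base_tail_filter Hom HF Fmeet) |
      split; [exact (stable_countable_tail_filter Hom HF Fst) |
        split; [exact (total_tail_filter HF) | exact (tail_filter_extends Hom)]]].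
Qed.
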